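(* For every formula $A$ of $\mathbf{L_1}$: $\dashv_H A$ if and only if $TA$ is not valid in first-order predicate logic with equality.
   Context: Formulas of $\mathbf{L_1}$: built from atomic formulas $\epsilon ab$ ($a,b$ name variables, possibly equal) with primitive connectives $\vee,\sim$; $\wedge,\supset,\equiv$ defined as usual. Disjunctions may be associated in any way. $\vdash_H A$: $A$ belongs to the smallest set containing all instances of classical propositional tautologies and all formulas $\epsilon ab\supset\epsilon aa$, $(\epsilon ab\wedge\epsilon bc)\supset\epsilon ac$, $(\epsilon ab\wedge\epsilon bb)\supset\epsilon ba$, closed under modus ponens. Positive/negative parts (occurrences): $A$ is a positive part of $A$; if $B\vee C$ is a positive part then $B,C$ are positive parts; if $\sim B$ is a positive part then $B$ is a negative part; if $\sim B$ is a negative part then $B$ is a positive part. $F[B_+,B_-]$ denotes a formula in which some $B$ has one occurrence as positive part and another non-overlapping occurrence as negative part. Hintikka formula: a formula $H$ such that (1) $H$ is not of the form $F[B_+,B_-]$; (2) if $B\vee C$ is a negative part of $H$ then $B$ or $C$ is; (3) if $\epsilon ab$ is a negative part then so is $\epsilon aa$; (4) if $\epsilon ab,\epsilon bc$ are negative parts then so is $\epsilon ac$; (5) if $\epsilon ab,\epsilon bb$ are negative parts then so is $\epsilon ba$. $\mathbf{HAR}$: fix a name variable $a_0$; $\dashv_H$ is the smallest set such that $\dashv_H\epsilon a_0a_0$; $\dashv_H\sim\epsilon a_0a_0$; if $\vdash_H A\supset B$ and $\dashv_H B$ then $\dashv_H A$; if $\dashv_H A$ and $A$ is obtained from $B$ by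 uniform substitution of name variables for name variables then $\dashv_H B$; if $A$ is a Hintikka formula that is a disjunction of atomic or negated atomic formulas, $\dashv_H A$, and $\epsilon ab$ is not a negative part of $A$, then $\dashv_H A\vee\epsilon ab$. Translation $T$ into first-order logic with equality, with a monadic predicate $F_a$ for each name variable $a$: $T\epsilon ab=\exists x(F_ax\wedge F_bx)\wedge\forall x\forall y(F_ax\wedge F_ay\supset x=y)$; $T(A\vee B)=TA\vee TB$; $T(\sim A)=\sim TA$. Valid: true in every structure with nonempty domain and $=$ as identity. *)

From Stdlib Require Import List.
Import ListNotations.

Definition name := nat.

Inductive form : Type :=
| Eps : name -> name -> form
| Or : form -> form -> form
| Neg : form -> form.

Definition And (A B : form) : form := Neg (Or (Neg A) (Neg B)).
Definition Imp (A B : form) : form := Or (Neg A) B.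
Definition Iff (A B : form) : form := And (Imp A B) (Imp B A).

Inductive pform : Type :=
| PVar : nat -> pform
| POr : pform -> pform -> pform
| PNeg : pform -> pform.

Fixpoint peval (v : nat -> bool) (P : pform) : bool :=
  match P with
  | PVar n => v n
  | POr P Q => orb (peval v P) (peval v Q)
  | PNeg P => negb (peval v P)
  end.

Definition ptautology (P : pform) : Prop := forall v, peval v P = true.

Fixpoint psubst (s : nat -> form) (P : pform) : form :=
  match P with
  | PVar n => s n
  | POr P Q => Or (psubst s P) (psubst s Q)
  | PNeg P => Neg (psubst s P)
  end.

Definition taut_instance (A : form) : Prop :=
  exists (P : pform) (s : nat -> form), ptautology P /\ A = psubst s P.

Inductive provH : form -> Prop :=
| pH_taut A : taut_instance A -> provH A
| pH_ax1 a b : provH (Imp (Eps a b) (Eps a a))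
| pH_ax2 a b c : provH (Imp (And (Eps a b) (Eps b c)) (Eps a c))
| pH_ax3 a b : provH (Imp (And (Eps a b) (Eps b b)) (Eps b a))
| pH_mp A B : provH (Imp A B) -> provH A -> provH B.

(** * Positive / negative parts (occurrences)
   An occurrence is given by its path from the root; polarity [true] means
   positive, [false] negative. *)
Inductive dir : Type := DL | DR | DN.

Inductive part (A : form) : list dir -> form -> bool -> Prop :=
| part_top : part A [] A true
| part_orl p B C : part A p (Or B C) true -> part A (p ++ [DL]) B true
| part_orr p B C : part A p (Or B C) true -> part A (p ++ [DR]) C true
| part_neg p B pol : part A p (Neg B) pol -> part A (p ++ [DN]) B (negb pol).

Definition pos_part (B A : form) : Prop := exists p, part A p B true.
Definition neg_part (B A : form) : Prop := exists p, part A p B false.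

Definition prefix (p q : list dir) : Prop := exists r, q = p ++ r.

(* A is of the form F[B_+, B_-]: some B has a positive occurrence and a
   non-overlapping negative occurrence. *)
Definition has_pos_neg (A : form) : Prop :=
  exists B p q, part A p B true /\ part A q B false /\
    ~ prefix p q /\ ~ prefix q p.

Definition hintikka (H : form) : Prop :=
  ~ has_pos_neg H /\
  (forall B C, neg_part (Or B C) H -> neg_part B H \/ neg_part C H) /\
  (forall a b, neg_part (Eps a b) H -> neg_part (Eps a a) H) /\
  (forall a b c, neg_part (Eps a b) H -> neg_part (Eps b c) H ->
     neg_part (Eps a c) H) /\
  (forall a b, neg_part (Eps a b) H -> neg_part (Eps b b) H ->
     neg_part (Eps b a) H).

Inductive literal_disj : form -> Prop :=
| ld_atom a b : literal_disj (Eps a b)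
| ld_neg a b : literal_disj (Neg (Eps a b))
| ld_or A B : literal_disj A -> literal_disj B -> literal_disj (Or A B).

Fixpoint nsubst (s : name -> name) (A : form) : form :=
  match A with
  | Eps a b => Eps (s a) (s b)
  | Or A B => Or (nsubst s A) (nsubst s B)
  | Neg A => Neg (nsubst s A)
  end.

Inductive rejH (a0 : name) : form -> Prop :=
| rH_pos : rejH a0 (Eps a0 a0)
| rH_neg : rejH a0 (Neg (Eps a0 a0))
| rH_mr A B : provH (Imp A B) -> rejH a0 B -> rejH a0 A
| rH_subst A B (s : name -> name) : rejH a0 A -> A = nsubst s B -> rejH a0 B
| rH_hint A a b : hintikka A -> literal_disj A -> rejH a0 A ->
    ~ neg_part (Eps a b) A -> rejH a0 (Or A (Eps a b)).

Definition var := nat.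

Inductive fo : Type :=
| FPred : name -> var -> fo
| FEq : var -> var -> fo
| FNot : fo -> fo
| FOr : fo -> fo -> fo
| FAnd : fo -> fo -> fo
| FImp : fo -> fo -> fo
| FEx : var -> fo -> fo
| FAll : var -> fo -> fo.

Definition upd {D : Type} (v : var -> D) (x : var) (d : D) : var -> D :=
  fun y => if Nat.eqb y x then d else v y.

Fixpoint sat {D : Type} (I : name -> D -> Prop) (v : var -> D) (phi : fo)
  : Prop :=
  match phi with
  | FPred a x => I a (v x)
  | FEq x y => v x = v y
  | FNot p => ~ sat I v p
  | FOr p q => sat I v p \/ sat I v q
  | FAnd p q => sat I v p /\ sat I v q
  | FImp p q => sat I v p -> sat I v q
  | FEx x p => exists d : D, sat I (upd v x d) p
  | FAll x p => forall d : D, sat I (upd v x d) p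
  end.

Definition fo_valid (phi : fo) : Prop :=
  forall (D : Type), inhabited D ->
  forall (I : name -> D -> Prop) (v : var -> D), sat I v phi.

Fixpoint T (A : form) : fo :=
  match A with
  | Eps a b =>
      FAnd (FEx 0 (FAnd (FPred a 0) (FPred b 0)))
           (FAll 0 (FAll 1 (FImp (FAnd (FPred a 0) (FPred a 1)) (FEq 0 1))))
  | Or A B => FOr (T A) (T B)
  | Neg A => FNot (T A)
  end.

(* Both directions go through the three laws of epsilon, packaged as the
   closure properties [eps_rel] of a binary relation on names.
   - Soundness (HAR rejects only non-valid formulas) is by induction on
     rejection.  Provable formulas are true under every boolean valuation of
     atoms whose true atoms form an [eps_rel], hence in every structure;
     substitution is harmless; and for the Hintikka rule every [eps_rel] N is
     realised exactly by the interpretation of "eps" in an explicit structure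
     ([model_eps_true]), which applied to the negative parts of the Hintikka
     formula yields a countermodel.
   - Completeness: from a structure falsifying TA we read off the finite
     "diagram" of A, the true and false atoms over the names of A.  The
     disjunction of the negated true atoms is rejected (by substitution from
     the axiom ~eps a0 a0), the false atoms are then added one by one with
     the Hintikka rule, and A implies the resulting disjunction by a
     tautology, so A is rejected by the modus-ponens rule of rejection. *)
From Stdlib Require Import List Bool Classical ClassicalEpsilon
  FunctionalExtensionality PropExtensionality Cantor.
Import ListNotations.

(* The laws of epsilon (ax1-ax3 of |-_H) as closure properties of a relation. *)
Record eps_rel (N : name -> name -> Prop) : Prop := {
  eps_left : forall a b, N a b -> N a a;
  eps_trans : forall a b c, N a b -> N b c -> N a c;
  eps_conv : forall a b, N a b -> N b b -> N b a }.

Lemma eps_rel_restrict (P : name -> Prop) (N : name -> name -> Prop) :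
  eps_rel N -> eps_rel (fun c d => P c /\ P d /\ N c d).
Proof.
  intros [H1 H2 H3]; split.
  - intros a b (Pa & _ & Hab); eauto.
  - intros a b c (Pa & _ & Hab) (_ & Pc & Hbc); eauto.
  - intros a b (Pa & Pb & Hab) (_ & _ & Hbb); eauto.
Qed.

Section Semantics.
Context {D : Type} (I : name -> D -> Prop) (v : var -> D).

Definition eps_true (a b : name) : Prop := sat I v (T (Eps a b)).

Lemma eps_true_iff a b : eps_true a b <->
  (exists d, I a d /\ I b d) /\ (forall x y, I a x -> I a y -> x = y).
Proof.
  unfold eps_true; simpl; unfold upd; simpl. split.
  - intros [Hex Huniq]; split; [exact Hex|].
    intros x y Hx Hy; exact (Huniq x y (conj Hx Hy)).
  - intros [Hex Huniq]; split; [exact Hex|].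
    intros x y [Hx Hy]; exact (Huniq x y Hx Hy).
Qed.

Lemma eps_true_rel : eps_rel eps_true.
Proof.
  split.
  - intros a b; rewrite !eps_true_iff; intros [[d [Ha _]] Hu]; eauto.
  - intros a b c; rewrite !eps_true_iff.
    intros [[d [Ha Hb]] Hua] [[e [Hb' Hc]] Hub].
    split; [|exact Hua]. exists d; split; [exact Ha|].
    rewrite (Hub d e Hb Hb'); exact Hc.
  - intros a b; rewrite !eps_true_iff.
    intros [[d [Ha Hb]] _] [_ Hub]; split; eauto.
Qed.

Definition atom_val (a b : name) : bool :=
  if excluded_middle_informative (eps_true a b) then true else false.

Lemma atom_val_true a b : atom_val a b = true <-> eps_true a b.
Proof.
  unfold atom_val; destruct (excluded_middle_informative _); split;
    congruence || tauto.
Qed.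

Lemma atom_val_rel : eps_rel (fun a b => atom_val a b = true).
Proof.
  destruct eps_true_rel as [H1 H2 H3]; split; intros *; rewrite !atom_val_true; eauto.
Qed.
End Semantics.

Fixpoint evalb (al : name -> name -> bool) (A : form) : bool :=
  match A with
  | Eps a b => al a b
  | Or A B => evalb al A || evalb al B
  | Neg A => negb (evalb al A)
  end.

Lemma sat_T_evalb {D : Type} (I : name -> D -> Prop) (v : var -> D) A :
  sat I v (T A) <-> evalb (atom_val I v) A = true.
Proof.
  induction A as [a b|A IHA B IHB|A IHA]; simpl.
  - rewrite atom_val_true; reflexivity.
  - rewrite orb_true_iff, IHA, IHB; reflexivity.
  - rewrite IHA, negb_true_iff, <- not_true_iff_false; reflexivity.
Qed.

Fixpoint skeleton (A : form) : pform :=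
  match A with
  | Eps a b => PVar (to_nat (a, b))
  | Or A B => POr (skeleton A) (skeleton B)
  | Neg A => PNeg (skeleton A)
  end.

Definition atom_of_code (n : nat) : form := let (a, b) := of_nat n in Eps a b.

Lemma psubst_skeleton A : psubst atom_of_code (skeleton A) = A.
Proof.
  induction A as [a b|A IHA B IHB|A IHA]; simpl; try congruence.
  unfold atom_of_code; pose proof (cancel_of_to (a, b)) as E; simpl in E.
  rewrite E; reflexivity.
Qed.

Lemma peval_skeleton w A :
  peval w (skeleton A) = evalb (fun a b => w (to_nat (a, b))) A.
Proof. induction A as [a b|A IHA B IHB|A IHA]; simpl; rewrite ?IHA, ?IHB; reflexivity. Qed.

Lemma evalb_psubst al s P :
  evalb al (psubst s P) = peval (fun n => evalb al (s n)) P.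
Proof. induction P; simpl; congruence. Qed.

Lemma provH_of_bool_taut A : (forall al, evalb al A = true) -> provH A.
Proof.
  intro Htaut; apply pH_taut; exists (skeleton A), atom_of_code; split.
  - intro w; rewrite peval_skeleton; apply Htaut.
  - symmetry; apply psubst_skeleton.
Qed.

Lemma provH_sound A : provH A ->
  forall al, eps_rel (fun a b => al a b = true) -> evalb al A = true.
Proof.
  induction 1 as [A [P [s [HP ->]]]|a b|a b c|a b|A B _ IHAB _ IHA];
    intros al Hal; simpl.
  - rewrite evalb_psubst; apply HP.
  - destruct (al a b) eqn:Eab; [rewrite (eps_left _ Hal a b Eab)|]; reflexivity.
  - destruct (al a b) eqn:Eab, (al b c) eqn:Ebc; try reflexivity.
    rewrite (eps_trans _ Hal a b c Eab Ebc); reflexivity.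
  - destruct (al a b) eqn:Eab, (al b b) eqn:Ebb; try reflexivity.
    rewrite (eps_conv _ Hal a b Eab Ebb); reflexivity.
  - specialize (IHAB al Hal); simpl in IHAB.
    rewrite (IHA al Hal) in IHAB; exact IHAB.
Qed.

Fixpoint subform_at (A : form) (p : list dir) {struct p} : option form :=
  match p with
  | [] => Some A
  | d :: p' =>
      match d, A with
      | DL, Or B _ => subform_at B p'
      | DR, Or _ C => subform_at C p'
      | DN, Neg B => subform_at B p'
      | _, _ => None
      end
  end.

Fixpoint polarity (p : list dir) : bool :=
  match p with
  | [] => true
  | DN :: p' => negb (polarity p')
  | _ :: p' => polarity p'
  end.

Lemma subform_at_app A p r :
  subform_at A (p ++ r) =
  match subform_at A p with Some B => subform_at B r | None => None end.
Proof.
  revert A; induction p as [|d p IH]; intro A; cbn; [reflexivity|].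
  destruct d, A; cbn; auto.
Qed.

Lemma polarity_app p r :
  polarity (p ++ r) = if polarity r then polarity p else negb (polarity p).
Proof.
  induction p as [|d p IH]; simpl.
  - destruct (polarity r); reflexivity.
  - destruct d; rewrite IH; destruct (polarity r); reflexivity.
Qed.

Lemma part_subform_at A p B pol :
  part A p B pol -> subform_at A p = Some B /\ pol = polarity p.
Proof.
  induction 1 as [|p B C _ [H1 H2]|p B C _ [H1 H2]|p B pol _ [H1 H2]];
    try rewrite subform_at_app, H1, polarity_app; simpl; subst; auto.
Qed.

(* Two occurrences of an atom with opposite polarities never overlap, since
   an atom has no proper subformulas. *)
Lemma atom_pos_neg A p q c d :
  part A p (Eps c d) true -> part A q (Eps c d) false -> has_pos_neg A.
Proof.
  intros Hp Hq; exists (Eps c d), p, q; do 2 (split; [assumption|]).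
  destruct (part_subform_at _ _ _ _ Hp) as [Sp Pp].
  destruct (part_subform_at _ _ _ _ Hq) as [Sq Pq].
  split; intros [[|x r] ->].
  - rewrite app_nil_r in Pq; congruence.
  - rewrite subform_at_app, Sp in Sq; destruct x; discriminate.
  - rewrite app_nil_r in Pp; congruence.
  - rewrite subform_at_app, Sq in Sp; destruct x; discriminate.
Qed.

Fixpoint disjunct (A X : form) : Prop :=
  X = A \/ match A with Or B C => disjunct B X \/ disjunct C X | _ => False end.

Lemma disjunct_refl A : disjunct A A.
Proof. destruct A; simpl; auto. Qed.

Lemma disjunct_or A B C : disjunct A (Or B C) -> disjunct A B /\ disjunct A C.
Proof.
  induction A as [a b|A1 IH1 A2 IH2|A1 _]; simpl.
  - intros [E|[]]; discriminate.
  - intros [E|[H|H]].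
    + injection E as -> ->; split; right; [left|right]; apply disjunct_refl.
    + destruct (IH1 H); split; right; left; assumption.
    + destruct (IH2 H); split; right; right; assumption.
  - intros [E|[]]; discriminate.
Qed.

Lemma disjunct_pos_part A X : disjunct A X -> pos_part X A.
Proof.
  enough (Hgen : forall B p, part A p B true -> disjunct B X -> pos_part X A)
    by (intro H; exact (Hgen A [] (part_top A) H)).
  induction B as [a b|B1 IH1 B2 IH2|B1 _]; intros p Hp Hd; simpl in Hd.
  - destruct Hd as [->|[]]; exists p; exact Hp.
  - destruct Hd as [->|[Hd|Hd]]; [exists p; exact Hp| |].
    + exact (IH1 _ (part_orl _ _ B1 B2 Hp) Hd).
    + exact (IH2 _ (part_orr _ _ B1 B2 Hp) Hd).
  - destruct Hd as [->|[]]; exists p; exact Hp.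
Qed.

Lemma disjunct_neg_part A c d : disjunct A (Neg (Eps c d)) -> neg_part (Eps c d) A.
Proof.
  intro H; destruct (disjunct_pos_part A _ H) as [q Hq].
  exists (q ++ [DN]); exact (part_neg A q (Eps c d) true Hq).
Qed.

Lemma literal_disj_disjunct A X : literal_disj A -> disjunct A X -> literal_disj X.
Proof.
  induction 1 as [a b|a b|B C HB IHB HC IHC]; simpl.
  - intros [->|[]]; constructor.
  - intros [->|[]]; constructor.
  - intros [->|[Hx|Hx]]; auto; constructor; assumption.
Qed.

Lemma literal_disj_part A p B pol : literal_disj A -> part A p B pol ->
  (pol = true /\ disjunct A B) \/
  (pol = false /\ exists c d, B = Eps c d /\ disjunct A (Neg (Eps c d))).
Proof.
  intro HA; induction 1 as [|p B C _ IH|p B C _ IH|p B pol _ IH].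
  - left; split; [reflexivity|apply disjunct_refl].
  - destruct IH as [[_ IH]|[_ [c [d [E _]]]]]; [|discriminate].
    left; split; [reflexivity|apply (disjunct_or _ _ _ IH)].
  - destruct IH as [[_ IH]|[_ [c [d [E _]]]]]; [|discriminate].
    left; split; [reflexivity|apply (disjunct_or _ _ _ IH)].
  - destruct IH as [[-> IH]|[_ [c [d [E _]]]]]; [|discriminate].
    right; split; [reflexivity|].
    pose proof (literal_disj_disjunct _ _ HA IH) as Hlit.
    inversion Hlit; subst; eauto.
Qed.

Lemma literal_disj_sat {D : Type} (I : name -> D -> Prop) v A :
  literal_disj A -> sat I v (T A) ->
  exists c d, (disjunct A (Eps c d) /\ eps_true I v c d) \/
              (disjunct A (Neg (Eps c d)) /\ ~ eps_true I v c d).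
Proof.
  induction 1 as [a b|a b|B C _ IHB _ IHC]; simpl; intro Hs.
  - exists a, b; left; split; [left; reflexivity|exact Hs].
  - exists a, b; right; split; [left; reflexivity|exact Hs].
  - destruct Hs as [Hs|Hs]; [destruct (IHB Hs) as (c & d & H)|destruct (IHC Hs) as (c & d & H)];
      exists c, d; simpl; tauto.
Qed.

(* Names c with N c c denote the singleton of their N-class; other names
   are empty or denote two distinct private objects plus the classes of the
   names e with N e c. *)
Section Realization.
Variable N : name -> name -> Prop.
Hypothesis HN : eps_rel N.

Definition model_dom : Type := ((name -> Prop) + (name * bool))%type.

Definition eps_class (c : name) : name -> Prop := fun e => N c e.

Definition model_ext (c : name) (x : model_dom) : Prop :=
  (N c c /\ x = inl (eps_class c)) \/
  (~ N c c /\ ((exists e, N e e /\ N e c /\ x = inl (eps_class e)) \/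
               x = inr (c, true) \/ x = inr (c, false))).

Lemma eps_class_eq c d : N c d -> N d c -> eps_class c = eps_class d.
Proof.
  intros Hcd Hdc; apply functional_extensionality; intro e.
  apply propositional_extensionality; unfold eps_class; split; intro H;
    eapply eps_trans; eauto.
Qed.

Lemma model_eps_true (v : var -> model_dom) c d :
  eps_true model_ext v c d <-> N c d.
Proof.
  rewrite eps_true_iff; split.
  - intros [[x [Hc Hd]] Huniq].
    destruct (classic (N c c)) as [Ncc|Ncc].
    + destruct Hc as [[_ ->]|[Ncc' _]]; [|contradiction].
      destruct Hd as [[Ndd E]|[_ [[e [Nee [Ned E]]]|[E|E]]]]; try discriminate;
        injection E as E.
      * assert (Hd : eps_class d d) by exact Ndd; rewrite <- E in Hd; exact Hd.
      * assert (He : eps_class e e) by exact Nee; rewrite <- E in He.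
        eapply eps_trans; eauto.
    + exfalso.
      assert (E : inr (c, true) = inr (c, false) :> model_dom)
        by (apply Huniq; right; split; auto).
      discriminate.
  - intro Ncd; assert (Ncc : N c c) by (eapply eps_left; eauto); split.
    + exists (inl (eps_class c)); split; [left; auto|].
      destruct (classic (N d d)) as [Ndd|Ndd].
      * left; split; [exact Ndd|].
        rewrite (eps_class_eq c d); auto; eapply eps_conv; eauto.
      * right; split; [exact Ndd|]; left; exists c; auto.
    + intros x y [[_ ->]|[Ncc' _]] [[_ ->]|[Ncc'' _]]; auto; contradiction.
Qed.
End Realization.

Lemma hintikka_eps_rel H : hintikka H -> eps_rel (fun c d => neg_part (Eps c d) H).
Proof. intros (_ & _ & H1 & H2 & H3); split; eauto. Qed.

(* The Hintikka rule preserves non-validity: in the realisation of the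
   negative parts of A, every negative literal of A is true and every
   positive one false, and [eps a b] is false as well. *)
Lemma hintikka_rule_sound A a b : hintikka A -> literal_disj A ->
  ~ neg_part (Eps a b) A -> ~ fo_valid (T (Or A (Eps a b))).
Proof.
  intros HA HL Hab Hvalid.
  set (N := fun c d => neg_part (Eps c d) A).
  set (v := fun _ : var => (inr (a, true) : model_dom)).
  pose proof (model_eps_true N (hintikka_eps_rel A HA) v) as Hmodel.
  destruct (Hvalid model_dom (inhabits (v 0)) (model_ext N) v) as [HsA|Hsab].
  - destruct (literal_disj_sat _ _ _ HL HsA) as (c & d & [[Hd Hs]|[Hd Hs]]).
    + apply (proj1 HA); apply Hmodel in Hs.
      destruct (disjunct_pos_part _ _ Hd) as [p Hp]; destruct Hs as [q Hq].
      exact (atom_pos_neg _ _ _ _ _ Hp Hq).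
    + apply Hs, Hmodel, disjunct_neg_part, Hd.
  - exact (Hab (proj1 (Hmodel a b) Hsab)).
Qed.

Lemma sat_nsubst {D : Type} (I : name -> D -> Prop) v s B :
  sat I v (T (nsubst s B)) <-> sat (fun a => I (s a)) v (T B).
Proof.
  induction B as [a b|B1 IH1 B2 IH2|B IH]; simpl; [reflexivity| |];
    rewrite ?IH, ?IH1, ?IH2; reflexivity.
Qed.

Lemma soundness a0 A : rejH a0 A -> ~ fo_valid (T A).
Proof.
  induction 1 as [| |A B HAB _ IH|A B s _ IH ->|A a b HH HL _ _ Hab].
  - intro Hv; destruct (Hv unit (inhabits tt) (fun _ _ => False) (fun _ => tt))
      as [[d [[] _]] _].
  - intro Hv; apply (Hv unit (inhabits tt) (fun _ _ => True) (fun _ => tt)).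
    split; [exists tt; auto|intros [] []; reflexivity].
  - intro Hv; apply IH; intros D HD I v; apply sat_T_evalb.
    pose proof (provH_sound _ HAB _ (atom_val_rel I v)) as HI; simpl in HI.
    rewrite (proj1 (sat_T_evalb I v A) (Hv D HD I v)) in HI; exact HI.
  - intro Hv; apply IH; intros D HD I v; apply sat_nsubst, Hv, HD.
  - apply hintikka_rule_sound; assumption.
Qed.

Fixpoint dlist (h : form) (xs : list form) : form :=
  match xs with [] => h | x :: xs' => dlist (Or h x) xs' end.

Lemma evalb_dlist al h xs : evalb al (dlist h xs) = true <->
  evalb al h = true \/ exists x, In x xs /\ evalb al x = true.
Proof.
  revert h; induction xs as [|x xs IH]; intro h; simpl.
  - split; [auto|]; intros [H|[x [[] _]]]; exact H.
  - rewrite IH; simpl; rewrite orb_true_iff; split.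
    + intros [[H|H]|[y [Hy H]]]; eauto.
    + intros [H|[y [[<-|Hy] H]]]; eauto.
Qed.

Lemma nsubst_dlist s h xs :
  nsubst s (dlist h xs) = dlist (nsubst s h) (map (nsubst s) xs).
Proof. revert h; induction xs as [|x xs IH]; intro h; simpl; auto. Qed.

Lemma disjunct_dlist h xs Y : disjunct (dlist h xs) Y ->
  (exists B C, Y = Or B C) \/ disjunct h Y \/ exists x, In x xs /\ disjunct x Y.
Proof.
  revert h; induction xs as [|x xs IH]; intros h H; simpl in *; auto.
  destruct (IH _ H) as [E|[[E|[E|E]]|[y [Hy E]]]]; eauto 6.
Qed.

Lemma disjunct_dlist_head h xs Y : disjunct h Y -> disjunct (dlist h xs) Y.
Proof.
  revert h; induction xs as [|x xs IH]; intros h H; simpl; auto.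
  apply IH; simpl; auto.
Qed.

Lemma disjunct_dlist_tail h xs x : In x xs -> disjunct (dlist h xs) x.
Proof.
  revert h; induction xs as [|y xs IH]; intros h Hx; [destruct Hx|].
  destruct Hx as [<-|Hx]; simpl; auto.
  apply disjunct_dlist_head; simpl; right; right; apply disjunct_refl.
Qed.

Lemma literal_disj_dlist h xs : literal_disj h ->
  (forall x, In x xs -> literal_disj x) -> literal_disj (dlist h xs).
Proof.
  revert h; induction xs as [|x xs IH]; intros h Hh Hxs; simpl; auto.
  apply IH; [constructor; auto; apply Hxs; left; reflexivity|].
  intros y Hy; apply Hxs; right; exact Hy.
Qed.

Definition neg_lit (p : name * name) : form := Neg (Eps (fst p) (snd p)).
Definition pos_lit (p : name * name) : form := Eps (fst p) (snd p).

Definition diagram (N : name -> name -> Prop) (h : form) : Prop :=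
  literal_disj h /\ (forall c d, disjunct h (Neg (Eps c d)) <-> N c d) /\
  (forall c d, disjunct h (Eps c d) -> ~ N c d).

(* Every disjunction of negated atoms is rejected: substituting a0 for all
   names turns it into one that implies the rejected ~eps a0 a0. *)
Lemma rej_neg_lits a0 n ns : rejH a0 (dlist (neg_lit n) (map neg_lit ns)).
Proof.
  apply rH_subst with (s := fun _ => a0)
    (A := nsubst (fun _ => a0) (dlist (neg_lit n) (map neg_lit ns))); [|reflexivity].
  apply rH_mr with (B := Neg (Eps a0 a0)); [|constructor].
  apply provH_of_bool_taut; intro al; simpl.
  destruct (al a0 a0) eqn:Ea; [|apply orb_true_r]; rewrite orb_false_r.
  apply negb_true_iff, not_true_iff_false.
  rewrite nsubst_dlist, map_map, evalb_dlist.
  intros [H|[x [Hx H]]]; [|apply in_map_iff in Hx; destruct Hx as [p [<- _]]];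
    simpl in H; rewrite Ea in H; discriminate.
Qed.

Section Diagrams.
Variable a0 : name.
Variable N : name -> name -> Prop.
Hypothesis HN : eps_rel N.

Lemma diagram_neg_part h c d : diagram N h -> (neg_part (Eps c d) h <-> N c d).
Proof.
  intros [HL [Hneg _]]; split.
  - intros [p Hp].
    destruct (literal_disj_part _ _ _ _ HL Hp) as [[E _]|[_ (c' & d' & E & H)]];
      [discriminate|].
    injection E as -> ->; apply Hneg, H.
  - intro H; apply disjunct_neg_part, Hneg, H.
Qed.

Lemma diagram_hintikka h : diagram N h -> hintikka h.
Proof.
  intro Hd; pose proof Hd as [HL [Hneg Hpos]].
  pose proof (fun c d => diagram_neg_part h c d Hd) as Hnp.
  destruct HN as [H1 H2 H3].
  split; [|split; [|split; [|split]]].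
  - intros (B & p & q & Hp & Hq & _).
    destruct (literal_disj_part _ _ _ _ HL Hq) as [[E _]|[_ (c & d & -> & H)]];
      [discriminate|].
    destruct (literal_disj_part _ _ _ _ HL Hp) as [[_ H']|[E _]]; [|discriminate].
    exact (Hpos c d H' (proj1 (Hneg c d) H)).
  - intros B C [p Hp].
    destruct (literal_disj_part _ _ _ _ HL Hp) as [[E _]|[_ (c & d & E & _)]];
      discriminate.
  - intros a b; rewrite !Hnp; eauto.
  - intros a b c; rewrite !Hnp; eauto.
  - intros a b; rewrite !Hnp; eauto.
Qed.

Lemma diagram_add_positive h ps : diagram N h -> rejH a0 h ->
  (forall c d, In (c, d) ps -> ~ N c d) -> rejH a0 (dlist h (map pos_lit ps)).
Proof.
  revert h; induction ps as [|[c d] ps IH]; intros h Hd Hr Hps; simpl; [exact Hr|].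
  assert (Hcd : ~ N c d) by (apply Hps; left; reflexivity).
  apply IH.
  - destruct Hd as [HL [Hneg Hpos]]; split; [constructor; [exact HL|constructor]|split].
    + intros c' d'; simpl; rewrite <- Hneg; split.
      * intros [E|[E|[E|[]]]]; [discriminate|exact E|discriminate].
      * auto.
    + intros c' d' [E|[E|[E|[]]]]; [discriminate|exact (Hpos c' d' E)|].
      injection E as -> ->; exact Hcd.
  - apply rH_hint; [apply diagram_hintikka, Hd|apply Hd|exact Hr|].
    rewrite (diagram_neg_part h c d Hd); exact Hcd.
  - intros c' d' H; apply Hps; right; exact H.
Qed.

Lemma diagram_initial negs : (forall c d, In (c, d) negs <-> N c d) ->
  exists h, diagram N h /\ rejH a0 h /\
    forall al c d, N c d -> al c d = false -> evalb al h = true.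
Proof.
  intro Hnegs; destruct negs as [|n ns].
  - exists (Eps a0 a0); split; [|split; [constructor|]].
    + split; [constructor|split].
      * intros c d; rewrite <- Hnegs; simpl; split; [intros [E|[]]; discriminate|intros []].
      * intros c d _ H; apply Hnegs in H; destruct H.
    + intros al c d H; apply Hnegs in H; destruct H.
  - exists (dlist (neg_lit n) (map neg_lit ns)); split; [|split; [apply rej_neg_lits|]].
    + split; [|split].
      * apply literal_disj_dlist; [constructor|].
        intros x Hx; apply in_map_iff in Hx; destruct Hx as [p [<- _]]; constructor.
      * intros c d; rewrite <- Hnegs; split.
        -- intro H; destruct (disjunct_dlist _ _ _ H) as [(B & C & E)|[E|(x & Hx & E)]];
             [discriminate| |apply in_map_iff in Hx; destruct Hx as [p [<- Hx]]];
             simpl in E; destruct E as [E|[]]; injection E as -> ->.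
           ++ left; destruct n; reflexivity.
           ++ right; destruct p; exact Hx.
        -- intros [->|H]; [apply disjunct_dlist_head, disjunct_refl|].
           apply disjunct_dlist_tail, in_map_iff; exists (c, d); auto.
      * intros c d H; exfalso.
        destruct (disjunct_dlist _ _ _ H) as [(B & C & E)|[E|(x & Hx & E)]];
          [discriminate| |apply in_map_iff in Hx; destruct Hx as [p [<- Hx]]];
          simpl in E; destruct E as [E|[]]; discriminate.
    + intros al c d H Hal; apply Hnegs in H; apply evalb_dlist.
      destruct H as [->|H]; [left; simpl; rewrite Hal; reflexivity|].
      right; exists (neg_lit (c, d)); split; [apply in_map, H|simpl; rewrite Hal; reflexivity].
Qed.

Lemma rejected_diagram negs poss :
  (forall c d, In (c, d) negs <-> N c d) -> (forall c d, In (c, d) poss -> ~ N c d) ->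
  exists L, rejH a0 L /\ forall al,
    (exists c d, N c d /\ al c d = false) \/
    (exists c d, In (c, d) poss /\ al c d = true) -> evalb al L = true.
Proof.
  intros Hnegs Hposs.
  destruct (diagram_initial negs Hnegs) as (h & Hd & Hr & Hh).
  exists (dlist h (map pos_lit poss)); split; [exact (diagram_add_positive h poss Hd Hr Hposs)|].
  intros al Hal; apply evalb_dlist; destruct Hal as [(c & d & H & E)|(c & d & H & E)].
  - left; exact (Hh al c d H E).
  - right; exists (pos_lit (c, d)); split; [apply in_map, H|exact E].
Qed.
End Diagrams.

Fixpoint names (A : form) : list name :=
  match A with
  | Eps a b => [a; b]
  | Or A B => names A ++ names B
  | Neg A => names A
  end.

Lemma evalb_agree al be A :
  (forall c d, In c (names A) -> In d (names A) -> al c d = be c d) ->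
  evalb al A = evalb be A.
Proof.
  induction A as [a b|A IHA B IHB|A IHA]; simpl; intro Hagree.
  - apply Hagree; simpl; auto.
  - rewrite IHA, IHB; [reflexivity| |]; intros c d Hc Hd;
      apply Hagree; apply in_or_app; auto.
  - rewrite IHA; auto.
Qed.

(* Completeness: a formula false in some structure is rejected, because it
   implies the rejected diagram of that structure over its names. *)
Lemma countermodel_rejected a0 A {D : Type} (I : name -> D -> Prop) v :
  ~ sat I v (T A) -> rejH a0 A.
Proof.
  intro Hs.
  set (X := names A).
  set (N := fun c d => In c X /\ In d X /\ eps_true I v c d).
  set (val := atom_val I v).
  set (negs := filter (fun p => val (fst p) (snd p)) (list_prod X X)).
  set (poss := filter (fun p => negb (val (fst p) (snd p))) (list_prod X X)).
  assert (Hposs : forall c d, In (c, d) poss <-> In c X /\ In d X /\ val c d = false).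
  { intros c d; unfold poss; rewrite filter_In, in_prod_iff, negb_true_iff; tauto. }
  destruct (rejected_diagram a0 N (eps_rel_restrict _ _ (eps_true_rel I v)) negs poss)
    as (L & HL & HevalL).
  - intros c d; unfold negs, N; rewrite filter_In, in_prod_iff; simpl.
    unfold val; rewrite atom_val_true; tauto.
  - intros c d Hp (_ & _ & Hcd); apply Hposs in Hp; destruct Hp as (_ & _ & Hf).
    apply atom_val_true in Hcd; unfold val in Hf; congruence.
  - apply rH_mr with (B := L); [|exact HL].
    apply provH_of_bool_taut; intro al; simpl.
    destruct (classic (forall c d, In c X -> In d X -> al c d = val c d))
      as [Hagree|Hdiff].
    + rewrite (evalb_agree al val A Hagree).
      destruct (evalb val A) eqn:E; [|reflexivity].
      exfalso; apply Hs, sat_T_evalb, E.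
    + rewrite HevalL, orb_true_r; [reflexivity|].
      apply not_all_ex_not in Hdiff; destruct Hdiff as [c Hdiff].
      apply not_all_ex_not in Hdiff; destruct Hdiff as [d Hdiff].
      apply imply_to_and in Hdiff; destruct Hdiff as [Hc Hdiff].
      apply imply_to_and in Hdiff; destruct Hdiff as [Hd Hne].
      destruct (val c d) eqn:Ev.
      * left; exists c, d; split; [|destruct (al c d); congruence].
        split; [exact Hc|split; [exact Hd|apply atom_val_true, Ev]].
      * right; exists c, d; split; [apply Hposs; auto|destruct (al c d); congruence].
Qed.

Theorem corollary6p1 : forall (a0 : name) (A : form),
  rejH a0 A <-> ~ fo_valid (T A).
Proof.
  intros a0 A; split; [apply soundness|].
  intro Hnot_valid; apply NNPP; intro Hnot_rej; apply Hnot_valid.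
  intros D _ I v; apply NNPP; intro Hs.
  exact (Hnot_rej (countermodel_rejected a0 A I v Hs)).
Qed.
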